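(* Let $k\ge2$, let $p_1,\dots,p_k$ be distinct primes, $n=p_1\cdots p_k$, and let $$f(x)=(1-x^{n})\cdot\frac{\prod_{i=2}^k\big(1-x^{p_2\cdots p_k/p_i}\big)}{\prod_{i=1}^k\big(1-x^{n/p_i}\big)}\in\mathbb{Z}[[x]].$$ Let $f^*$ be the unique polynomial of degree $<n$ with $f^*\equiv f\pmod{x^n}$. Then every coefficient of $f^*$ has absolute value at most $\binom{k-2}{\lfloor (k-2)/2\rfloor}$.
   Context: $f$ is viewed as a formal power series (its denominator has constant term $1$). In the exponents, $p_2\cdots p_k/p_i$ means $p_2\cdots p_k$ divided by $p_i$. *)

From HB Require Import structures.
From mathcomp Require Import all_boot all_order all_algebra.
Set Implicit Arguments. Unset Strict Implicit. Unset Printing Implicit Defensive.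
Import Order.TTheory GRing.Theory Num.Theory.
Local Open Scope ring_scope.

(* Primes are indexed p 0, ..., p (k-1); p 0 plays the role of p_1. *)

Definition nprod (k : nat) (p : nat -> nat) : nat := (\prod_(i < k) p i)%N.

Definition mprod (k : nat) (p : nat -> nat) : nat := (\prod_(1 <= i < k) p i)%N.

Definition numer (k : nat) (p : nat -> nat) : {poly int} :=
  (1 - 'X^(nprod k p)) *
  \prod_(1 <= i < k) (1 - 'X^(mprod k p %/ p i)%N).

Definition denom (k : nat) (p : nat -> nat) : {poly int} :=
  \prod_(i < k) (1 - 'X^(nprod k p %/ p i)%N).

(* g agrees with the power series numer/denom modulo x^N:
   since denom is a unit in Z[[x]], g == numer/denom (mod x^N)
   iff g * denom == numer (mod x^N). *)
Definition congr_series (N : nat) (g num den : {poly int}) : Prop :=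
  forall i : nat, (i < N)%N -> (g * den - num)`_i = 0.

From HB Require Import structures.
From mathcomp Require Import all_boot all_order all_algebra.
From mathcomp Require Import zify lra.
Import Order.TTheory GRing.Theory Num.Theory.
Local Open Scope ring_scope.
Set Implicit Arguments. Unset Strict Implicit.

(* Write m = p_2 ... p_k (so n = p_1 m) and c_i = m / p_i. Modulo x^n,
   (1 - x^n) / (1 - x^m) = sum_(j < p_1) x^(j m) and
   (1 - x^c_i) / (1 - x^(p_1 c_i)) = sum_t (x^(t p_1 c_i) - x^((t p_1 + 1) c_i)),
   so f is congruent to the product of these sums. Expanding the product over the subsets
   T of {2, ..., k}, the exponent picked in the i-th factor for a monomial x^e, e < n, is
   forced: it is w c_i with w < p_1 p_i, w = [i in T] (mod p_1) and w c_i = e (mod p_i).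
   Hence the coefficient of x^e is sum_T (-1)^|T| [a(T) <= e], where a(T) adds up one
   of two numbers for each i, according to whether i is in T. After a global sign change
   all these increments are nonnegative; pairing T with T + {i0}, for i0 of smallest
   increment, then cancels everything except an antichain of subsets of a (k - 2)-set,
   whose size Sperner's theorem bounds by C(k - 2, (k - 2)/2). *)

Lemma leq_bin_half (n r : nat) : ('C(n, r) <= 'C(n, n./2))%N.
Proof.
have up s : (s < n./2)%N -> ('C(n, s) <= 'C(n, s.+1))%N.
  move=> hs; rewrite -(leq_pmul2l (ltn0Sn s)) mul_bin_left leq_mul2r.
  by apply/orP; right; move: hs; rewrite -divn2; lia.
have down s : (n./2 <= s)%N -> ('C(n, s.+1) <= 'C(n, s))%N.
  move=> hs; rewrite -(leq_pmul2l (ltn0Sn s)) mul_bin_left leq_mul2r.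
  by apply/orP; right; move: hs; rewrite -divn2; lia.
case: (leqP r n./2) => hr.
  suff mono j : (j + r <= n./2)%N -> ('C(n, r) <= 'C(n, j + r))%N.
    by have := mono (n./2 - r)%N; rewrite subnK // leqnn; apply.
  by elim: j => [|j IH] hj //; apply: leq_trans (IH (ltnW hj)) (up _ hj).
suff mono j : ('C(n, j + n./2) <= 'C(n, n./2))%N.
  by have := mono (r - n./2)%N; rewrite subnK // ltnW.
by elim: j => [|j IH] //; apply: leq_trans IH; apply: down; apply: leq_addl.
Qed.

Definition antichain (T : finType) (W : {set {set T}}) :=
  {in W &, forall A B : {set T}, A \subset B -> A = B}.

Lemma invr_bin_succ (R : numFieldType) (n a : nat) : (a <= n)%N ->
  ('C(n.+1, a)%:R : R)^-1 = ((n.+1 - a)%:R / n.+1%:R) * ('C(n, a)%:R)^-1.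
Proof.
move=> ha; have key : n.+1%:R * 'C(n, a)%:R = (n.+1 - a)%:R * 'C(n.+1, a)%:R :> R.
  by rewrite -!natrM mul_bin_down.
have na_neq0 : (n.+1 - a)%:R != 0 :> R by rewrite pnatr_eq0 -lt0n subn_gt0 ltnS.
by rewrite -mulrA -invfM key invfM mulrA mulfV ?mul1r.
Qed.

Lemma antichain_top (T : finType) (G : {set T}) (W : {set {set T}}) :
  {in W, forall A : {set T}, A \subset G} -> antichain W -> G \in W -> W = [set G].
Proof.
move=> sub_G antiW GW; apply/setP => A; rewrite inE.
by apply/idP/eqP => [AW | ->] //; apply: antiW AW GW (sub_G A AW).
Qed.

Lemma card_lt_top (T : finType) (G : {set T}) (W : {set {set T}}) :
  {in W, forall A : {set T}, A \subset G} -> G \notin W ->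
  {in W, forall A : {set T}, #|A| < #|G|}%N.
Proof.
move=> sub_G GnW A AW; rewrite proper_card // properEneq sub_G // andbT.
by apply: contraNneq GnW => <-.
Qed.

Lemma lym_inequality (R : numFieldType) (T : finType) (G : {set T}) (W : {set {set T}}) :
  {in W, forall A : {set T}, A \subset G} -> antichain W ->
  \sum_(A in W) ('C(#|G|, #|A|)%:R : R)^-1 <= 1.
Proof.
move Gn: #|G| => n; elim: n G W Gn => [|n IH] G W Gn sub_G antiW;
  (have [GW | GnW] := boolP (G \in W);
    first by rewrite (antichain_top sub_G antiW GW) big_set1 Gn binn invr1).
  by rewrite big1 // => A /(card_lt_top sub_G GnW); rewrite Gn.
have ltA := card_lt_top sub_G GnW.
have n1_neq0 : n.+1%:R != 0 :> R by rewrite pnatr_eq0.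
rewrite (eq_bigr (fun A => \sum_(x in G :\: A) (n.+1%:R^-1 * ('C(n, #|A|)%:R)^-1)));
  last first.
  move=> A AW; rewrite sumr_const cardsD (setIidPr (sub_G A AW)) Gn.
  have le_n : (#|A| <= n)%N by rewrite -ltnS -Gn ltA.
  by rewrite invr_bin_succ // -mulrA mulr_natl.
rewrite (exchange_big_dep (mem G)) /=; last by move=> A x _; rewrite inE => /andP[].
apply: le_trans (_ : \sum_(x in G) n.+1%:R^-1 <= 1); last first.
  by rewrite sumr_const Gn -[n.+1%:R^-1 *+ _]mulr_natl mulfV.
apply: ler_sum => x xG; rewrite -mulr_sumr ler_piMr ?invr_ge0 ?ler0n //.
have := IH (G :\ x) [set A in W | x \notin A].
rewrite big_mkcond [X in _ -> X <= _]big_mkcond /=.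
have -> : \sum_A (if A \in [set A0 in W | x \notin A0] then ('C(n, #|A|)%:R : R)^-1 else 0)
        = \sum_A (if (A \in W) && (x \in G :\: A) then ('C(n, #|A|)%:R)^-1 else 0).
  by apply: eq_bigr => A _; rewrite !inE xG andbT.
apply.
- by move: Gn; rewrite (cardsD1 x G) xG add1n => -[].
- by move=> A; rewrite inE => /andP[AW xA]; rewrite subsetD1 sub_G.
- by move=> A B; rewrite !inE => /andP[AW _] /andP[BW _]; apply: antiW.
Qed.

Lemma sperner (T : finType) (G : {set T}) (W : {set {set T}}) :
  {in W, forall A : {set T}, A \subset G} -> antichain W ->
  (#|W| <= 'C(#|G|, #|G|./2))%N.
Proof.
move=> sub_G antiW; set c := 'C(#|G|, #|G|./2).
have c_gt0 : (0 < c)%N by rewrite bin_gt0 -divn2 leq_div.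
suff : (#|W|%:R / c%:R : rat) <= 1 by rewrite ler_pdivrMr ?ltr0n // mul1r ler_nat.
apply: le_trans (lym_inequality rat sub_G antiW).
rewrite -sum1_card natr_sum mulr_suml; apply: ler_sum => A AW.
rewrite mul1r lef_pV2 ?posrE ?ltr0n ?c_gt0 ?ler_nat ?leq_bin_half //.
by rewrite bin_gt0 subset_leq_card ?sub_G.
Qed.

Lemma sum_set_pairU1 (V : nmodType) (I : finType) (i0 : I) (F : {set I} -> V) :
  \sum_(T : {set I}) F T = \sum_(T : {set I} | i0 \notin T) (F T + F (i0 |: T)).
Proof.
rewrite (bigID (fun T : {set I} => i0 \in T)) /= addrC big_split /=; congr (_ + _).
rewrite (reindex_onto (fun T => i0 |: T) (fun T => T :\ i0)) /=; last first.
  by move=> T i0T; rewrite setD1K.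
apply: eq_bigl => T; rewrite setU11 /=.
have [i0T | i0nT] := boolP (i0 \in T); last by apply/eqP; rewrite setU1K.
by apply/negbTE/eqP => e; move: (setD11 i0 (i0 |: T)); rewrite e i0T.
Qed.

Lemma alternating_threshold_nonneg (R : realDomainType) (M : nat)
    (d : 'I_M.+1 -> R) (C : R) : (forall i, 0 <= d i) ->
  `|\sum_(T : {set 'I_M.+1} | \sum_(i in T) d i <= C) ((-1) ^+ #|T| : R)|
    <= 'C(M, M./2)%:R.
Proof.
move=> d_ge0; pose i0 := [arg min_(i < ord0) d i]%O.
(* Only the sets T of W do not cancel against i0 |: T, and W is an antichain. *)
have d_min j : d i0 <= d j by rewrite /i0; case: arg_minP => // i _; apply.
pose W := [set T : {set 'I_M.+1} |
  (i0 \notin T) && (C - d i0 < \sum_(i in T) d i <= C)].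
rewrite big_mkcond (sum_set_pairU1 i0) /=.
apply: le_trans (ler_norm_sum _ _ _) _.
apply: (le_trans (_ : _ <= \sum_(T : {set _} | i0 \notin T) ((T \in W)%:R : R)) _).
  apply: ler_sum => T i0T; rewrite big_setU1 //= cardsU1 i0T exprS inE i0T /=.
  set s := \sum_(i in T) d i; have := d_ge0 i0.
  case: (lerP s C) => hs; case: (lerP (d i0 + s) C) => hs2 /= d0_ge0.
  - by rewrite mulN1r subrr normr0 ler0n.
  - by rewrite addr0 normrX normrN1 expr1n andbT (_ : C - d i0 < s = true) //; lra.
  - by lra.
  - by rewrite addr0 normr0 ler0n.
have -> : \sum_(T : {set _} | i0 \notin T) (T \in W)%:R = #|W|%:R :> R.
  rewrite -sum1_card natr_sum big_mkcond [RHS]big_mkcond /=.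
  apply: eq_bigr => T _; have [TW | _] := boolP (T \in W); last by case: ifP.
  by move: TW; rewrite inE => /andP[->].
have cardG : #|[set~ i0]| = M by rewrite cardsC1 card_ord.
rewrite ler_nat; have := @sperner _ [set~ i0] W; rewrite cardG; apply.
  move=> A; rewrite inE => /andP[i0A _]; apply/subsetP => x xA.
  by rewrite !inE; apply: contraNneq i0A => <-.
move=> A B; rewrite !inE => /andP[_ /andP[lowA _]] /andP[_ /andP[_ highB]] AB.
apply/eqP; rewrite eqEsubset AB /=; apply/subsetP => x xB.
apply/negPn/negP => xnA.
have : \sum_(i in A) d i + d x <= \sum_(i in B) d i.
  rewrite [X in _ <= X](big_setID A) /= (setIidPr AB) lerD2l (bigD1 x) /=.
    by rewrite lerDl sumr_ge0.
  by rewrite !inE xnA.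
have := d_min x; lra.
Qed.

Lemma sign_card (R : pzRingType) (I : finType) (A : {set I}) :
  (-1) ^+ #|A| = \prod_(i : I) (if i \in A then -1 else 1 : R).
Proof. by rewrite -big_mkcond /= prodr_const. Qed.

Lemma alternating_threshold (R : realDomainType) (M : nat)
    (a0 a1 : 'I_M.+1 -> R) (C : R) :
  `|\sum_(T : {set 'I_M.+1} | \sum_i (if i \in T then a1 i else a0 i) <= C)
      ((-1) ^+ #|T| : R)| <= 'C(M, M./2)%:R.
Proof.
(* Flipping membership on Z makes every increment hi i - lo i nonnegative. *)
pose Z := [set i | a1 i < a0 i].
pose lo i := Num.min (a0 i) (a1 i); pose hi i := Num.max (a0 i) (a1 i).
pose flip (T : {set 'I_M.+1}) := [set i | (i \in T) (+) (i \in Z)].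
have flipK : involutive flip.
  by move=> T; apply/setP => i; rewrite !inE addbK.
rewrite (reindex_inj (inv_inj flipK)) /=.
have -> : \sum_(T : {set 'I_M.+1} | \sum_i (if i \in flip T then a1 i else a0 i) <= C)
      (-1) ^+ #|flip T|
  = (-1) ^+ #|Z| * \sum_(T : {set 'I_M.+1} | \sum_(i in T) (hi i - lo i) <= C - \sum_i lo i)
      (-1) ^+ #|T| :> R.
  rewrite mulr_sumr; apply: eq_big => [T | T _].
    have split i : (if i \in flip T then a1 i else a0 i)
        = lo i + (if i \in T then hi i - lo i else 0).
      by rewrite /lo /hi !inE; case: (ltP (a1 i) (a0 i)); case: (i \in T) => /=; lra.
    by rewrite (eq_bigr _ (fun i _ => split i)) big_split /= -big_mkcond lerBrDr addrC.
  rewrite !sign_card -big_split /=; apply: eq_bigr => i _; rewrite inE.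
  by case: (i \in T); case: (i \in Z); rewrite /= ?mul1r ?mulr1 // mulrNN mulr1.
rewrite normrM normrX normrN1 expr1n mul1r.
by apply: alternating_threshold_nonneg => i; rewrite subr_ge0 /lo /hi ge_min le_max lexx.
Qed.

Section ScaledChinese.

Variables a q c : nat.
Hypotheses (a_gt0 : (0 < a)%N) (q_gt0 : (0 < q)%N) (c_gt0 : (0 < c)%N).
Hypotheses (coprime_aq : coprime a q) (coprime_cq : coprime c q).

Local Open Scope nat_scope.

Definition chinese_scaled (b r : nat) :=
  chinese a q b (r * (egcdn c q).1) %% (a * q).

Lemma egcdn_inv_mod : (egcdn c q).1 * c = 1 %[mod q].
Proof.
case: (egcdnP q c_gt0) => u v -> _ /=.
by move: coprime_cq; rewrite /coprime => /eqP ->; rewrite modnMDl.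
Qed.

Lemma chinese_scaled_lt b r : chinese_scaled b r < a * q.
Proof. by rewrite ltn_pmod // muln_gt0 a_gt0. Qed.

Lemma chinese_scaled_modl b r : chinese_scaled b r = b %[mod a].
Proof. by rewrite modn_dvdm ?dvdn_mulr // chinese_modl. Qed.

Lemma chinese_scaled_modr b r : chinese_scaled b r * c = r %[mod q].
Proof.
rewrite -modnMml modn_dvdm ?dvdn_mull // chinese_modr // modnMml -mulnA.
by rewrite -modnMmr egcdn_inv_mod modnMmr muln1.
Qed.

Lemma eqn_modMr_coprime w w' : w * c = w' * c %[mod q] -> w = w' %[mod q].
Proof.
have cancel z : z = z * c * (egcdn c q).1 %[mod q].
  by rewrite -mulnA -modnMmr [c * _]mulnC egcdn_inv_mod modnMmr muln1.
by move=> e; rewrite (cancel w) (cancel w') -(modnMml (w * c)) e modnMml.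
Qed.

Lemma chinese_scaled_unique b r w : w < a * q ->
  w = b %[mod a] -> w * c = r %[mod q] -> w = chinese_scaled b r.
Proof.
move=> w_lt wa wq.
have : w == chinese_scaled b r %[mod a * q].
  rewrite chinese_remainder // chinese_scaled_modl wa eqxx /=.
  by apply/eqP/eqn_modMr_coprime; rewrite chinese_scaled_modr.
by rewrite !modn_small ?chinese_scaled_lt // => /eqP.
Qed.

Lemma chinese_scaled_mod b r r' :
  r = r' %[mod q] -> chinese_scaled b r = chinese_scaled b r'.
Proof.
move=> rr'; apply: chinese_scaled_unique; rewrite ?chinese_scaled_lt //.
  exact: chinese_scaled_modl.
by rewrite chinese_scaled_modr.
Qed.

End ScaledChinese.

Section PrimeProducts.

Local Open Scope nat_scope.

Lemma prime_coprime_prod (I : eqType) (F : I -> nat) (r : seq I) (i : I) :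
  (forall j, prime (F j)) -> injective F -> i \notin r ->
  coprime (F i) (\prod_(j <- r) F j).
Proof.
move=> F_prime F_inj inr; rewrite prime_coprime // Euclid_dvd_prod // big_has.
apply/hasPn => j jr; rewrite dvdn_prime2 //.
by apply: contraNneq inr => /F_inj ->.
Qed.

Lemma prod_primes_dvdn (I : eqType) (F : I -> nat) (r : seq I) y :
  (forall j, prime (F j)) -> injective F -> uniq r ->
  {in r, forall j, F j %| y} -> \prod_(j <- r) F j %| y.
Proof.
move=> F_prime F_inj; elim: r => [|i r IH] /=; first by rewrite big_nil dvd1n.
move=> /andP[inr r_uniq] dvd_y; rewrite big_cons Gauss_dvd.
  by rewrite dvd_y ?mem_head // IH // => j jr; rewrite dvd_y // inE jr orbT.
exact: prime_coprime_prod.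
Qed.

End PrimeProducts.

Section TruncatedSeries.

Variable R : nzRingType.

Definition vanishes_below (N : nat) (q : {poly R}) := forall i, (i < N)%N -> q`_i = 0.

Lemma vanishes_belowD N (q r : {poly R}) :
  vanishes_below N q -> vanishes_below N r -> vanishes_below N (q + r).
Proof. by move=> vq vr i iN; rewrite coefD vq ?vr ?addr0. Qed.

Lemma vanishes_belowN N (q : {poly R}) : vanishes_below N q -> vanishes_below N (- q).
Proof. by move=> vq i iN; rewrite coefN vq ?oppr0. Qed.

Lemma vanishes_belowMr N (q r : {poly R}) : vanishes_below N q -> vanishes_below N (q * r).
Proof.
move=> vq i iN; rewrite coefM big1 // => j _; rewrite vq ?mul0r //.
exact: leq_ltn_trans (ltnSE (ltn_ord j)) iN.
Qed.

Lemma vanishes_belowMl N (q r : {poly R}) : vanishes_below N q -> vanishes_below N (r * q).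
Proof.
move=> vq i iN; rewrite coefM big1 // => j _; rewrite vq ?mulr0 //.
exact: leq_ltn_trans (leq_subr _ _) iN.
Qed.

Lemma vanishes_below_Xn N d : (N <= d)%N -> vanishes_below N 'X^d.
Proof.
move=> Nd i iN; rewrite coefXn; case: eqP => // id.
by move: iN; rewrite id ltnNge Nd.
Qed.

Lemma vanishes_below_prod1 (I : Type) (r : seq I) (F : I -> {poly R}) N :
  (forall i, vanishes_below N (F i - 1)) -> vanishes_below N (\prod_(i <- r) F i - 1).
Proof.
move=> vF; elim/big_rec: _ => [|i x _ vx]; first by rewrite subrr => j _; rewrite coef0.
have -> : F i * x - 1 = (F i - 1) * x + (x - 1) by rewrite mulrBl mul1r addrA subrK.
by apply: vanishes_belowD => //; apply: vanishes_belowMr.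
Qed.

Lemma vanishes_below_cancel N (q r : {poly R}) :
  r`_0 = 1 -> vanishes_below N (q * r) -> vanishes_below N q.
Proof.
move=> r0 vqr; elim/ltn_ind => i IH iN; have := vqr i iN.
rewrite coefM big_ord_recr /= subnn r0 mulr1 big1 ?add0r // => j _.
by rewrite IH ?mul0r // (ltn_trans _ iN).
Qed.

Lemma coef0_1subXn d : (0 < d)%N -> (1 - 'X^d : {poly R})`_0 = 1.
Proof. by case: d => // d _; rewrite coefB coef1 coefXn /= subr0. Qed.

Definition geometric_poly (c a : nat) : {poly R} := \sum_(j < c) 'X^(j * a).

Lemma geometric_polyM c a : geometric_poly c a * (1 - 'X^a) = 1 - 'X^(c * a).
Proof.
elim: c => [|c IH]; first by rewrite /geometric_poly big_ord0 mul0r mul0n expr0 subrr.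
rewrite /geometric_poly big_ord_recr /= mulrDl IH mulrBr mulr1 -exprD mulSnr.
by rewrite addrA subrK.
Qed.

End TruncatedSeries.

Lemma congr_series_trunc N (P num den : {poly int}) :
  vanishes_below N (P * den - num) -> congr_series N (\poly_(i < N) P`_i) num den.
Proof.
move=> vP; change (vanishes_below N (\poly_(i < N) P`_i * den - num)).
have -> : \poly_(i < N) P`_i * den - num
    = (\poly_(i < N) P`_i - P) * den + (P * den - num).
  by rewrite mulrBl addrA subrK.
apply: vanishes_belowD => //; apply: vanishes_belowMr => i iN.
by rewrite coefB coef_poly iN subrr.
Qed.

Lemma congr_series_unique N (g h num den : {poly int}) : den`_0 = 1 ->
  congr_series N g num den -> congr_series N h num den ->
  forall i, (i < N)%N -> g`_i = h`_i.
Proof.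
move=> den0 cg ch i iN; apply/eqP; rewrite -subr_eq0 -coefB; apply/eqP.
apply: (vanishes_below_cancel den0) iN.
have -> : (g - h) * den = (g * den - num) - (h * den - num).
  by rewrite mulrBl opprB addrA subrK.
exact: vanishes_belowD (vanishes_belowN ch).
Qed.

Section PrimeFamily.

Variables (K : nat) (p : nat -> nat).
Hypothesis p_prime : forall i, (i < K.+2)%N -> prime (p i).
Hypothesis p_inj : forall i j, (i < K.+2)%N -> (j < K.+2)%N -> p i = p j -> i = j.

(* Here k = K.+2, and [i : 'I_K.+1] stands for the prime [p i.+1]. *)

Local Notation n := (nprod K.+2 p).
Local Notation m := (mprod K.+2 p).

Local Open Scope nat_scope.

Definition cof (i : 'I_K.+1) := m %/ p i.+1.

(* The unique exponent (t * p 0 + b) * cof i below n congruent to e modulo p i.+1. *)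
Definition forced_exponent (i : 'I_K.+1) (b : bool) (e : nat) :=
  chinese_scaled (p 0) (p i.+1) (cof i) b e * cof i.

Let p0_prime : prime (p 0) := p_prime (ltn0Sn K.+1).
Let pS_prime (i : 'I_K.+1) : prime (p i.+1) := p_prime (i := i.+1) (ltn_ord i).

Let p0_gt0 : 0 < p 0 := prime_gt0 p0_prime.
Let pS_gt0 (i : 'I_K.+1) : 0 < p i.+1 := prime_gt0 (pS_prime i).

Let pS_inj : injective (fun i : 'I_K.+1 => p i.+1).
Proof. by move=> i j /p_inj-/(_ (ltn_ord i) (ltn_ord j)) [/val_inj]. Qed.

Let coprime_p0_pS (i : 'I_K.+1) : coprime (p 0) (p i.+1).
Proof.
rewrite prime_coprime // dvdn_prime2 //.
by apply/eqP => /p_inj-/(_ (ltn0Sn K.+1) (ltn_ord i)).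
Qed.

Lemma mprodE : m = \prod_(i < K.+1) p i.+1.
Proof. by rewrite /mprod big_add1 /= big_mkord. Qed.

Lemma nprodE : n = p 0 * m.
Proof. by rewrite /nprod big_ord_recl mprodE. Qed.

Lemma mprod_gt0 : 0 < m.
Proof. by rewrite mprodE prodn_gt0 // => i; rewrite prime_gt0. Qed.

Lemma cofE (i : 'I_K.+1) : cof i = \prod_(j < K.+1 | j != i) p j.+1.
Proof. by rewrite /cof mprodE (bigD1 i) //= mulKn // prime_gt0. Qed.

Lemma mprod_cof (i : 'I_K.+1) : m = p i.+1 * cof i.
Proof. by rewrite cofE mprodE (bigD1 i). Qed.

Lemma nprod_cof (i : 'I_K.+1) : n = p 0 * p i.+1 * cof i.
Proof. by rewrite nprodE (mprod_cof i) mulnA. Qed.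

Lemma cof_gt0 (i : 'I_K.+1) : 0 < cof i.
Proof. by move: mprod_gt0; rewrite (mprod_cof i) muln_gt0 => /andP[]. Qed.

Lemma dvdn_cof (i j : 'I_K.+1) : j != i -> p j.+1 %| cof i.
Proof. by move=> ji; rewrite cofE (bigD1 j) //= dvdn_mulr. Qed.

Lemma coprime_cof (i : 'I_K.+1) : coprime (cof i) (p i.+1).
Proof.
rewrite coprime_sym cofE -big_filter.
apply: (prime_coprime_prod (F := fun j : 'I_K.+1 => p j.+1)) => //.
by rewrite mem_filter eqxx.
Qed.

Lemma mprod_dvdn y : (forall i : 'I_K.+1, p i.+1 %| y) -> m %| y.
Proof.
move=> dvd_y; rewrite mprodE.
exact: (prod_primes_dvdn (F := fun j : 'I_K.+1 => p j.+1) _ _ (index_enum_uniq _)).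
Qed.

Lemma dvdn_forced_exponent (i j : 'I_K.+1) b e :
  j != i -> p j.+1 %| forced_exponent i b e.
Proof. by move=> ji; rewrite dvdn_mull // dvdn_cof. Qed.

Lemma forced_exponent_mod (i : 'I_K.+1) b e :
  forced_exponent i b e = e %[mod p i.+1].
Proof. exact: (chinese_scaled_modr (cof_gt0 i) (coprime_p0_pS i) (coprime_cof i)). Qed.

Lemma forced_exponentB (i : 'I_K.+1) b e d : d <= e -> p i.+1 %| d ->
  forced_exponent i b (e - d) = forced_exponent i b e.
Proof.
move=> de dvd_d; congr (_ * _).
apply: (chinese_scaled_mod p0_gt0 (pS_gt0 i) (cof_gt0 i) (coprime_p0_pS i) (coprime_cof i)).
by apply/eqP; rewrite eq_sym eqn_mod_dvd ?leq_subr // subKn.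
Qed.

Lemma forced_exponent_unique (i : 'I_K.+1) (b : bool) e t :
  (t * p 0 + b) * cof i <= e < n ->
  (t * p 0 + b) * cof i = e %[mod p i.+1] ->
  (t * p 0 + b) * cof i = forced_exponent i b e.
Proof.
move=> /andP[le_e lt_n] mod_e; congr (_ * _).
apply: (chinese_scaled_unique p0_gt0 (pS_gt0 i) (cof_gt0 i) (coprime_p0_pS i) (coprime_cof i)).
- rewrite -(ltn_pmul2r (cof_gt0 i)) -nprod_cof; exact: leq_ltn_trans le_e lt_n.
- by rewrite modnMDl.
- exact: mod_e.
Qed.

Lemma mprod_dvdn_sub_forced (T : {set 'I_K.+1}) e :
  \sum_i forced_exponent i (i \in T) e <= e ->
  m %| e - \sum_i forced_exponent i (i \in T) e.
Proof.
move=> le_e; apply: mprod_dvdn => i; rewrite -eqn_mod_dvd // (bigD1 i) //=.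
set rest := \sum_(j | j != i) _.
have dvd_rest : p i.+1 %| rest.
  by apply: dvdn_sum => j ji; rewrite dvdn_forced_exponent // eq_sym.
by rewrite eq_sym -(divnK dvd_rest) addnC modnMDl forced_exponent_mod.
Qed.

Lemma forced_exponent_index (i : 'I_K.+1) (b : bool) e :
  exists t : 'I_n, (t * p 0 + b) * cof i = forced_exponent i b e.
Proof.
rewrite /forced_exponent; set x := chinese_scaled _ _ _ _ _.
have x_mod : x %% p 0 = b.
  rewrite chinese_scaled_modl ?coprime_p0_pS // modn_small //.
  by apply: leq_trans (prime_gt1 p0_prime); rewrite ltnS leq_b1.
have t_lt : x %/ p 0 < n.
  rewrite ltn_divLR //; apply: leq_trans (chinese_scaled_lt (cof i) p0_gt0 (pS_gt0 i) b e) _.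
  by rewrite (nprod_cof i) -mulnA leq_pmulr // muln_gt0 cof_gt0.
by exists (Ordinal t_lt); rewrite /= -x_mod -divn_eq.
Qed.

Lemma forced_exponent_dvdn_sub (i : 'I_K.+1) (b : bool) t e A :
  (t * p 0 + b) * cof i + A <= e -> e < n -> p i.+1 %| A ->
  m %| e - ((t * p 0 + b) * cof i + A) ->
  (t * p 0 + b) * cof i = forced_exponent i b e.
Proof.
set d := (t * p 0 + b) * cof i => le_e lt_n dvd_A dvd_rest.
apply: forced_exponent_unique; first by rewrite lt_n andbT (leq_trans (leq_addr A d)).
apply/eqP; rewrite eq_sym eqn_mod_dvd; last exact: leq_trans (leq_addr A d) le_e.
have -> : e - d = e - (d + A) + A by lia.
by rewrite dvdn_add // (dvdn_trans _ dvd_rest) // (mprod_cof i) dvdn_mulr.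
Qed.

Local Open Scope ring_scope.

Definition factor_series (i : 'I_K.+1) (b : bool) : {poly int} :=
  \sum_(t < n) 'X^((t * p 0 + b) * cof i).

Definition trunc_series : {poly int} :=
  geometric_poly int (p 0) m *
  \prod_(i < K.+1) (factor_series i false - factor_series i true).

Lemma factor_series_diff (i : 'I_K.+1) :
  factor_series i false - factor_series i true
  = (1 - 'X^(cof i)) * geometric_poly int n (p 0 * cof i).
Proof.
rewrite -sumrB /geometric_poly mulr_sumr; apply: eq_bigr => t _.
rewrite mulrBl mul1r -exprD addn0 mulnDl mul1n -mulnA.
by rewrite [(cof i + _)%N]addnC.
Qed.

Lemma numerE : numer K.+2 p = (1 - 'X^n) * \prod_(i < K.+1) (1 - 'X^(cof i)).
Proof. by rewrite /numer big_add1 /= big_mkord. Qed.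

Lemma denomE :
  denom K.+2 p = (1 - 'X^m) * \prod_(i < K.+1) (1 - 'X^(p 0 * cof i)).
Proof.
rewrite /denom big_ord_recl /= {1}nprodE mulKn //; congr (_ * _).
by apply: eq_bigr => i _; rewrite (nprod_cof i) mulnAC mulnK.
Qed.

Lemma denom_coef0 : (denom K.+2 p)`_0 = 1.
Proof.
rewrite denomE coef0M coef0_prod coef0_1subXn ?mprod_gt0 // mul1r big1 // => i _.
by rewrite coef0_1subXn // muln_gt0 p0_gt0 cof_gt0.
Qed.

Lemma trunc_series_congr :
  vanishes_below n (trunc_series * denom K.+2 p - numer K.+2 p).
Proof.
have -> : trunc_series * denom K.+2 p
    = numer K.+2 p * \prod_(i < K.+1) (1 - 'X^(n * (p 0 * cof i))).
  rewrite /trunc_series denomE numerE mulrACA -big_split /=.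
  rewrite (eq_bigr (fun i => (1 - 'X^(cof i)) * (1 - 'X^(n * (p 0 * cof i)))));
    last by move=> i _; rewrite factor_series_diff -mulrA geometric_polyM.
  by rewrite big_split /= geometric_polyM -nprodE mulrA.
rewrite -{2}[numer K.+2 p]mulr1 -mulrBr; apply/vanishes_belowMl/vanishes_below_prod1.
move=> i; rewrite addrAC subrr add0r; apply/vanishes_belowN/vanishes_below_Xn.
by rewrite leq_pmulr // muln_gt0 p0_gt0 cof_gt0.
Qed.

Lemma coef_geometric_mprod e : (e < n)%N ->
  (geometric_poly int (p 0) m)`_e = (m %| e)%:R.
Proof.
move=> en; rewrite coef_sum.
have [dvd_e | ndvd_e] := boolP (m %| e)%N; last first.
  rewrite big1 // => j _; rewrite coefXn; apply/eqP; rewrite pnatr_eq0 eqb0.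
  by apply: contra ndvd_e => /eqP ->; apply: dvdn_mull.
have j_lt : (e %/ m < p 0)%N by rewrite ltn_divLR ?mprod_gt0 // -nprodE.
rewrite (bigD1 (Ordinal j_lt)) //= coefXn divnK // eqxx big1 ?addr0 // => j jn.
rewrite coefXn; apply/eqP; rewrite pnatr_eq0 eqb0; apply: contra jn => /eqP ej.
by apply/eqP/val_inj; rewrite /= ej mulnK ?mprod_gt0.
Qed.

Lemma coef_trunc_term (T : {set 'I_K.+1}) (s : seq 'I_K.+1) e :
  uniq s -> (e < n)%N ->
  (geometric_poly int (p 0) m * \prod_(i <- s) factor_series i (i \in T))`_e =
  ((\sum_(i <- s) forced_exponent i (i \in T) e <= e) &&
   (m %| e - \sum_(i <- s) forced_exponent i (i \in T) e))%N%:R.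
Proof.
elim: s e => [|i s IH] e /=.
  by move=> _ en; rewrite big_nil mulr1 coef_geometric_mprod // big_nil subn0.
case/andP=> i_notin s_uniq en; set b := i \in T.
rewrite !big_cons mulrCA /factor_series mulr_suml coef_sum.
set A := \sum_(j <- s) _.
have A_sub d : (d <= e)%N -> (forall j, j \in s -> p j.+1 %| d)%N ->
    \sum_(j <- s) forced_exponent j (j \in T) (e - d) = A.
  by move=> de dvd_d; apply: eq_big_seq => j js; rewrite forced_exponentB ?dvd_d.
have dvd_A : (p i.+1 %| A)%N.
  rewrite /A big_seq; apply: dvdn_sum => j js; apply: dvdn_forced_exponent.
  by apply: contraNneq i_notin => ->.
have [t0 dt0] := forced_exponent_index i b e.
rewrite (bigD1 t0) //= [X in _ + X]big1 ?addr0 => [|t tt0].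
  rewrite coefXnM dt0; case: ltnP => [eF | Fe].
    by rewrite leqNgt ltn_addr.
  rewrite IH ?(leq_ltn_trans (leq_subr _ _) en) // A_sub // => [|j js].
    by rewrite leq_subRL // subnDA.
  by rewrite dvdn_forced_exponent //; apply: contraNneq i_notin => <-.
rewrite coefXnM; case: ltnP => // dte.
rewrite IH ?(leq_ltn_trans (leq_subr _ _) en) // A_sub // => [|j js]; last first.
  by rewrite dvdn_mull // dvdn_cof //; apply: contraNneq i_notin => <-.
apply/eqP; rewrite pnatr_eq0 eqb0; apply: contra tt0 => /andP[Ale dvd_rest].
rewrite -subnDA in dvd_rest; rewrite leq_subRL // in Ale.
move: (forced_exponent_dvdn_sub Ale en dvd_A dvd_rest); rewrite -dt0 => /eqP.
by rewrite eqn_pmul2r ?cof_gt0 // eqn_add2r eqn_pmul2r // => /eqP/val_inj ->.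
Qed.

Lemma coef_trunc_series e : (e < n)%N ->
  trunc_series`_e = \sum_(T : {set 'I_K.+1} |
    (\sum_i forced_exponent i (i \in T) e <= e)%N) (-1) ^+ #|T|.
Proof.
move=> en; rewrite /trunc_series.
rewrite (eq_bigr (fun i => - factor_series i true + factor_series i false));
  last by move=> i _; rewrite addrC.
rewrite bigA_distr mulr_sumr coef_sum [RHS]big_mkcond; apply: eq_bigr => T _ /=.
rewrite (eq_bigr (fun i => (if i \in T then -1 else 1) * factor_series i (i \in T)));
  last by move=> i _; case: (i \in T); rewrite ?mulN1r ?mul1r.
have coef_sign k (Q : {poly int}) : ((-1) ^+ k * Q)`_e = (-1) ^+ k * Q`_e.
  by elim: k => [|k IHk]; rewrite ?expr0 ?mul1r // !exprS !mulN1r !mulNr coefN IHk.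
rewrite big_split /= -sign_card mulrCA coef_sign.
rewrite (coef_trunc_term T (index_enum_uniq _) en).
by case: leqP => le_e /=; rewrite ?mulr0 // mprod_dvdn_sub_forced // mulr1.
Qed.

Lemma trunc_series_coef_bound e : (e < n)%N ->
  `|trunc_series`_e| <= 'C(K, K./2)%:R.
Proof.
move=> en; rewrite coef_trunc_series //.
pose a (b : bool) i := (forced_exponent i b e)%:R : int.
have -> : \sum_(T : {set 'I_K.+1} | (\sum_i forced_exponent i (i \in T) e <= e)%N)
    (-1) ^+ #|T| = \sum_(T : {set 'I_K.+1} |
      \sum_i (if i \in T then a true i else a false i) <= e%:R) (-1) ^+ #|T| :> int.
  apply: eq_bigl => T; rewrite -(ler_nat int) natr_sum; congr (_ <= _).
  by apply: eq_bigr => i _; case: (i \in T).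
exact: alternating_threshold.
Qed.

End PrimeFamily.

Theorem lemma2 (k : nat) (p : nat -> nat)
  (hk : (2 <= k)%N)
  (hprime : forall i, (i < k)%N -> prime (p i))
  (hdist : forall i j, (i < k)%N -> (j < k)%N -> p i = p j -> i = j) :
  (exists g : {poly int}, (size g <= nprod k p)%N /\
     congr_series (nprod k p) g (numer k p) (denom k p)) /\
  (forall g : {poly int}, (size g <= nprod k p)%N ->
     congr_series (nprod k p) g (numer k p) (denom k p) ->
     forall j : nat, `|g`_j| <= ('C(k - 2, (k - 2)./2))%:Z).
Proof.
case: k hk hprime hdist => [|[|K]] // _ p_prime p_inj.
set n := nprod K.+2 p.
have trunc_congr := congr_series_trunc (trunc_series_congr p_prime).
split; first by exists (\poly_(e < n) (trunc_series K p)`_e); rewrite size_poly.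
move=> g size_g g_congr j; rewrite !subSS subn0.
have [jn | nj] := ltnP j n; last by rewrite nth_default ?normr0 // (leq_trans size_g).
rewrite (congr_series_unique (denom_coef0 p_prime) g_congr trunc_congr jn).
by rewrite coef_poly jn -natz (trunc_series_coef_bound p_prime p_inj).
Qed.
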